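(* Let $X$ be a gamble and $\varepsilon>0$. Let $\underline{P}$ be a coherent lower prevision on a set of gambles as specified below, with conjugate $\overline{P}$, let $\underline{Q}$ be any coherent lower prevision on the linear space of all gambles extending $\underline{P}$, and let $\underline{V}(X)=\min_{c\in\mathbb{R}}\underline{Q}((X-c)^2)$ and $\overline{V}(X)=\min_{c\in\mathbb{R}}\overline{Q}((X-c)^2)$ be the lower and upper variances of $X$. (a) If $\underline{P}$ is coherent on $\{X,-X,I_{(X\le\underline{P}(X)-\varepsilon)},I_{(X\le\overline{P}(X)-\varepsilon)}\}$, then $$\underline{P}(X\le\overline{P}(X)-\varepsilon)\le\frac{\overline{V}(X)}{\overline{V}(X)+\varepsilon^2},\qquad \underline{P}(X\le\underline{P}(X)-\varepsilon)\le\frac{\underline{V}(X)}{\underline{V}(X)+\varepsilon^2}.$$ (b) If $\underline{P}$ is coherent on $\{X,-X,I_{(X\ge\underline{P}(X)+\varepsilon)},I_{(X\ge\overline{P}(X)+\varepsilon)}\}$, then $$\underline{P}(X\ge\underline{P}(X)+\varepsilon)\le\frac{\overline{V}(X)}{\overline{V}(X)+\varepsilon^2},\qquad \underline{P}(X\ge\overline{P}(X)+\varepsilon)\le\frac{\underline{V}(X)}{\underline{V}(X)+\varepsilon^2}.$$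
   Context: $\Pi$ is a partition of the sure event into pairwise disjoint non-impossible events; a gamble is a bounded map $X:\Pi\to\mathbb{R}$; $(X\le a)$, $(X\ge a)$ are events with indicators, and $\underline{P}(X\le a)=\underline{P}(I_{(X\le a)})$. A map $P:\mathcal{D}\to\mathbb{R}$ is a dF-coherent prevision iff for all $n\in\mathbb{N}$, $s_0,\dots,s_n\in\mathbb{R}$, $X_0,\dots,X_n\in\mathcal{D}$, $\sup\sum_{i=0}^n s_i(X_i-P(X_i))\ge 0$. A lower prevision $\underline{P}:\mathcal{D}\to\mathbb{R}$ is coherent iff there is a nonempty set of dF-coherent previsions on $\mathcal{D}$ whose pointwise infimum is $\underline{P}$; every coherent lower prevision on $\mathcal{D}$ has a coherent extension to all gambles. Conjugates: $\overline{P}(Y)=-\underline{P}(-Y)$, $\overline{Q}(Y)=-\underline{Q}(-Y)$. The minima defining $\underline{V}(X),\overline{V}(X)$ are attained (Walley). *)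

From Stdlib Require Import Reals Lra.
Open Scope R_scope.

(* Atoms of the partition Pi are the elements of a type Om; a gamble is a
   (bounded_gamble) map Om -> R.  Sets of gambles are predicates. *)
Definition bounded_gamble {Om : Type} (X : Om -> R) : Prop :=
  exists M, forall w, Rabs (X w) <= M.

(* sup_w f w >= 0, written out (f is bounded_gamble in all uses). *)
Definition sup_ge0 {Om : Type} (f : Om -> R) : Prop :=
  forall d, 0 < d -> exists w, - d < f w.

Definition dF_coherent {Om : Type} (D : (Om -> R) -> Prop)
  (P : (Om -> R) -> R) : Prop :=
  forall (n : nat) (s : nat -> R) (Xs : nat -> Om -> R),
    (forall i, (i <= n)%nat -> D (Xs i)) ->
    sup_ge0 (fun w => sum_f_R0 (fun i => s i * (Xs i w - P (Xs i))) n).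

Definition is_inf_on {Om : Type} (M : ((Om -> R) -> R) -> Prop)
  (P : (Om -> R) -> R) (X : Om -> R) : Prop :=
  (forall P', M P' -> P X <= P' X) /\
  (forall d, 0 < d -> exists P', M P' /\ P' X < P X + d).

Definition coherent_lower {Om : Type} (D : (Om -> R) -> Prop)
  (P : (Om -> R) -> R) : Prop :=
  exists M : ((Om -> R) -> R) -> Prop,
    (exists P0, M P0) /\
    (forall P', M P' -> dF_coherent D P') /\
    (forall X, D X -> is_inf_on M P X).

Definition upper {Om : Type} (P : (Om -> R) -> R) (Y : Om -> R) : R :=
  - P (fun w => - Y w).

Definition ind_le {Om : Type} (X : Om -> R) (a : R) : Om -> R :=
  fun w => if Rle_dec (X w) a then 1 else 0.
Definition ind_ge {Om : Type} (X : Om -> R) (a : R) : Om -> R :=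
  fun w => if Rle_dec a (X w) then 1 else 0.

Definition sqdev {Om : Type} (X : Om -> R) (c : R) : Om -> R :=
  fun w => (X w - c) ^ 2.

Definition is_min_over (f : R -> R) (v : R) : Prop :=
  (exists c, f c = v) /\ (forall c, v <= f c).

Definition dom_a {Om : Type} (P : (Om -> R) -> R) (X : Om -> R) (eps : R)
  (Y : Om -> R) : Prop :=
  Y = X \/ Y = (fun w => - X w) \/
  Y = ind_le X (P X - eps) \/ Y = ind_le X (upper P X - eps).
Definition dom_b {Om : Type} (P : (Om -> R) -> R) (X : Om -> R) (eps : R)
  (Y : Om -> R) : Prop :=
  Y = X \/ Y = (fun w => - X w) \/
  Y = ind_ge X (P X + eps) \/ Y = ind_ge X (upper P X + eps).

(* Every linear prevision R satisfies the one-sided Chebyshev bound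
   R(X <= a) (b - a)^2 <= R((X - c)^2) + (b - R X)^2 for a < b and any c.
   The coherent extension Q is the lower envelope of such R, so choosing R
   whose mean R X (resp. whose value R((X - c)^2)) is close to the relevant
   lower or upper mean (resp. variance bound), and taking b at distance u
   from that mean, gives Q(X <= m - eps) (eps + u)^2 <= V + u^2 for all
   u >= 0.  The choice u = V / eps turns this into Cantelli's bound
   V / (V + eps^2); the events (X >= a) are handled symmetrically. *)

From Stdlib Require Import Reals Lra.
Open Scope R_scope.

Lemma le_of_forall_le_add_mul (x y K : R) :
  0 <= K -> (forall e, 0 < e <= 1 -> x <= y + e * K) -> x <= y.
Proof.
  intros HK H. apply Rle_plus_epsilon. intros d Hd.
  set (e := Rmin 1 (d / (K + 1))).
  assert (He : 0 < e <= 1).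
  { split; [apply Rmin_pos; [lra | apply Rdiv_lt_0_compat; lra] | apply Rmin_l]. }
  assert (HeK : e * (K + 1) <= d).
  { apply (Rmult_le_reg_r (/ (K + 1))); [apply Rinv_0_lt_compat; lra|].
    rewrite Rmult_assoc, Rinv_r, Rmult_1_r by lra. apply Rmin_r. }
  specialize (H e He). nra.
Qed.

Lemma sqr_add_le (u e' e : R) :
  0 <= u -> 0 <= e' <= e -> e <= 1 -> (u + e') ^ 2 <= u ^ 2 + e * (2 * u + 1).
Proof. intros. nra. Qed.

Lemma le_cantelli_value (q V eps : R) :
  0 <= V -> 0 < eps ->
  (forall u, 0 <= u -> q * (eps + u) ^ 2 <= V + u ^ 2) -> q <= V / (V + eps ^ 2).
Proof.
  intros HV Heps Hu.
  assert (Hs : 0 < V + eps ^ 2) by nra.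
  assert (H := Hu (V / eps) ltac:(apply Rmult_le_pos; [lra | left; apply Rinv_0_lt_compat, Heps])).
  assert (Hsq : q * (V + eps ^ 2) ^ 2 <= V * (V + eps ^ 2)).
  { replace (q * (V + eps ^ 2) ^ 2) with (eps ^ 2 * (q * (eps + V / eps) ^ 2))
      by (field; lra).
    replace (V * (V + eps ^ 2)) with (eps ^ 2 * (V + (V / eps) ^ 2)) by (field; lra).
    apply Rmult_le_compat_l; [nra | exact H]. }
  apply (Rmult_le_reg_r (V + eps ^ 2)); [exact Hs|].
  replace (V / (V + eps ^ 2) * (V + eps ^ 2)) with V by (field; lra).
  nra.
Qed.

Section Gambles.
Variables (Om : Type) (X : Om -> R).
Hypothesis hX : bounded_gamble X.

Lemma bounded_gamble_opp (Y : Om -> R) :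
  bounded_gamble Y -> bounded_gamble (fun w => - Y w).
Proof. intros [B HB]. exists B. intros w. rewrite Rabs_Ropp. apply HB. Qed.

Lemma bounded_gamble_sqdev (c : R) : bounded_gamble (sqdev X c).
Proof.
  destruct hX as [B HB]. exists ((B + Rabs c) ^ 2). intros w. unfold sqdev.
  rewrite <- RPow_abs. apply pow_incr. split; [apply Rabs_pos|].
  unfold Rminus. eapply Rle_trans; [apply Rabs_triang|].
  rewrite Rabs_Ropp. apply Rplus_le_compat_r, HB.
Qed.

Lemma bounded_gamble_ind_le (a : R) : bounded_gamble (ind_le X a).
Proof.
  exists 1. intros w. unfold ind_le.
  destruct Rle_dec; [rewrite Rabs_R1 | rewrite Rabs_R0]; lra.
Qed.

Lemma bounded_gamble_ind_ge (a : R) : bounded_gamble (ind_ge X a).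
Proof.
  exists 1. intros w. unfold ind_ge.
  destruct Rle_dec; [rewrite Rabs_R1 | rewrite Rabs_R0]; lra.
Qed.

Lemma ind_le_scaled_le_sqdev (a b t : R) (w : Om) :
  0 < t <= b - a -> t ^ 2 * ind_le X a w <= sqdev X b w.
Proof.
  intros Ht. unfold ind_le, sqdev.
  destruct Rle_dec as [Hw|Hw]; [|pose proof (pow2_ge_0 (X w - b))]; nra.
Qed.

Lemma ind_ge_scaled_le_sqdev (a b t : R) (w : Om) :
  0 < t <= a - b -> t ^ 2 * ind_ge X a w <= sqdev X b w.
Proof.
  intros Ht. unfold ind_ge, sqdev.
  destruct Rle_dec as [Hw|Hw]; [|pose proof (pow2_ge_0 (X w - b))]; nra.
Qed.

End Gambles.

Section LinearPrevision.
Variables (Om : Type) (P : (Om -> R) -> R).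
Hypothesis HP : dF_coherent bounded_gamble P.

Lemma dF_combination_le (f g h : Om -> R) (a b c k : R) :
  bounded_gamble f -> bounded_gamble g -> bounded_gamble h ->
  (forall w, a * f w + b * g w + c * h w <= k) ->
  a * P f + b * P g + c * P h <= k.
Proof.
  intros Hf Hg Hh Hk.
  pose (s := fun i : nat => match i with 0%nat => a | 1%nat => b | _ => c end).
  pose (Xs := fun i : nat => match i with 0%nat => f | 1%nat => g | _ => h end).
  assert (HD : forall i, (i <= 2)%nat -> bounded_gamble (Xs i))
    by (intros [|[|]] _; assumption).
  apply Rnot_lt_le. intros Hlt.
  destruct (HP 2%nat s Xs HD (a * P f + b * P g + c * P h - k)) as [w Hw]; [lra|].
  simpl in Hw. specialize (Hk w). lra.
Qed.

Lemma dF_scaled_le (f g : Om -> R) (a : R) :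
  bounded_gamble f -> bounded_gamble g ->
  (forall w, a * f w <= g w) -> a * P f <= P g.
Proof.
  intros Hf Hg H.
  assert (C : a * P f + -1 * P g + 0 * P f <= 0)
    by (apply dF_combination_le; auto; intros w; specialize (H w); lra).
  lra.
Qed.

Lemma dF_opp (Y : Om -> R) : bounded_gamble Y -> P (fun w => - Y w) = - P Y.
Proof.
  intros HY. pose proof (bounded_gamble_opp _ Y HY) as HnY.
  assert (C1 : 1 * P (fun w => - Y w) + 1 * P Y + 0 * P Y <= 0)
    by (apply dF_combination_le; auto; intros w; lra).
  assert (C2 : -1 * P (fun w => - Y w) + -1 * P Y + 0 * P Y <= 0)
    by (apply dF_combination_le; auto; intros w; lra).
  lra.
Qed.

Section Deviation.
Variable X : Om -> R.
Hypothesis hX : bounded_gamble X.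

Lemma dF_sqdev_shift (b c : R) :
  P (sqdev X b) = P (sqdev X c) + (b - P X) ^ 2 - (c - P X) ^ 2.
Proof.
  pose proof (bounded_gamble_sqdev _ X hX b). pose proof (bounded_gamble_sqdev _ X hX c).
  assert (C1 : 1 * P (sqdev X b) + -1 * P (sqdev X c) + (2 * (b - c)) * P X
               <= b ^ 2 - c ^ 2)
    by (apply dF_combination_le; auto; intros w; unfold sqdev; right; ring).
  assert (C2 : -1 * P (sqdev X b) + 1 * P (sqdev X c) + (2 * (c - b)) * P X
               <= c ^ 2 - b ^ 2)
    by (apply dF_combination_le; auto; intros w; unfold sqdev; right; ring).
  nra.
Qed.

Lemma dF_ind_le_bound (a b c t : R) :
  0 < t <= b - a -> P (ind_le X a) * t ^ 2 <= P (sqdev X c) + (b - P X) ^ 2.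
Proof.
  intros Ht.
  assert (H : t ^ 2 * P (ind_le X a) <= P (sqdev X b)).
  { apply dF_scaled_le; auto using bounded_gamble_ind_le, bounded_gamble_sqdev.
    intros w. apply ind_le_scaled_le_sqdev, Ht. }
  rewrite (dF_sqdev_shift b c) in H. pose proof (pow2_ge_0 (c - P X)). lra.
Qed.

Lemma dF_ind_ge_bound (a b c t : R) :
  0 < t <= a - b -> P (ind_ge X a) * t ^ 2 <= P (sqdev X c) + (b - P X) ^ 2.
Proof.
  intros Ht.
  assert (H : t ^ 2 * P (ind_ge X a) <= P (sqdev X b)).
  { apply dF_scaled_le; auto using bounded_gamble_ind_ge, bounded_gamble_sqdev.
    intros w. apply ind_ge_scaled_le_sqdev, Ht. }
  rewrite (dF_sqdev_shift b c) in H. pose proof (pow2_ge_0 (c - P X)). lra.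
Qed.

End Deviation.
End LinearPrevision.

Section LowerEnvelope.
Variables (Om : Type) (M : ((Om -> R) -> R) -> Prop) (Q : (Om -> R) -> R).
Hypothesis HM_linear : forall P, M P -> dF_coherent bounded_gamble P.
Hypothesis HM_inf : forall Y, bounded_gamble Y -> is_inf_on M Q Y.

Lemma member_le_upper (P : (Om -> R) -> R) (Y : Om -> R) :
  M P -> bounded_gamble Y -> P Y <= upper Q Y.
Proof.
  intros HP HY. unfold upper.
  pose proof (proj1 (HM_inf _ (bounded_gamble_opp _ Y HY)) P HP) as H.
  rewrite (dF_opp _ P (HM_linear P HP) Y HY) in H. lra.
Qed.

Lemma exists_member_near_upper (Y : Om -> R) (d : R) :
  bounded_gamble Y -> 0 < d -> exists P, M P /\ upper Q Y - d < P Y.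
Proof.
  intros HY Hd.
  destruct (proj2 (HM_inf _ (bounded_gamble_opp _ Y HY)) d Hd) as [P [HP H]].
  exists P. split; [exact HP|].
  rewrite (dF_opp _ P (HM_linear P HP) Y HY) in H. unfold upper. lra.
Qed.

Lemma lower_ge0 (Y : Om -> R) :
  bounded_gamble Y -> (forall w, 0 <= Y w) -> 0 <= Q Y.
Proof.
  intros HY HY0. apply Rnot_lt_le. intros Hlt.
  destruct (proj2 (HM_inf _ HY) (- Q Y)) as [P [HP H]]; [lra|].
  assert (HPY : 0 * P Y <= P Y)
    by (apply (dF_scaled_le _ P (HM_linear P HP)); auto; intros w; rewrite Rmult_0_l; apply HY0).
  lra.
Qed.

Lemma lower_le_upper (Y : Om -> R) : bounded_gamble Y -> Q Y <= upper Q Y.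
Proof.
  intros HY. destruct (exists_member_near_upper Y 1 HY Rlt_0_1) as [P [HP _]].
  pose proof (proj1 (HM_inf _ HY) P HP). pose proof (member_le_upper P Y HP HY). lra.
Qed.

Lemma upper_ge0 (Y : Om -> R) :
  bounded_gamble Y -> (forall w, 0 <= Y w) -> 0 <= upper Q Y.
Proof.
  intros HY HY0. eapply Rle_trans; [apply lower_ge0 | apply lower_le_upper]; auto.
Qed.

Section Cantelli.
Variables (X : Om -> R) (eps : R).
Hypothesis hX : bounded_gamble X.
Hypothesis heps : 0 < eps.

Lemma lower_ind_le_bound (P : (Om -> R) -> R) (a b c t : R) :
  M P -> 0 < t <= b - a -> Q (ind_le X a) * t ^ 2 <= P (sqdev X c) + (b - P X) ^ 2.
Proof.
  intros HP Ht.
  pose proof (proj1 (HM_inf _ (bounded_gamble_ind_le _ X a)) P HP).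
  pose proof (dF_ind_le_bound _ P (HM_linear P HP) X hX a b c t Ht).
  assert (0 < t ^ 2) by nra. nra.
Qed.

Lemma lower_ind_ge_bound (P : (Om -> R) -> R) (a b c t : R) :
  M P -> 0 < t <= a - b -> Q (ind_ge X a) * t ^ 2 <= P (sqdev X c) + (b - P X) ^ 2.
Proof.
  intros HP Ht.
  pose proof (proj1 (HM_inf _ (bounded_gamble_ind_ge _ X a)) P HP).
  pose proof (dF_ind_ge_bound _ P (HM_linear P HP) X hX a b c t Ht).
  assert (0 < t ^ 2) by nra. nra.
Qed.

Lemma cantelli_le_upper_mean (c u : R) : 0 <= u ->
  Q (ind_le X (upper Q X - eps)) * (eps + u) ^ 2 <= upper Q (sqdev X c) + u ^ 2.
Proof.
  intros Hu. apply (le_of_forall_le_add_mul _ _ (2 * u + 1)); [lra|]. intros e He.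
  destruct (exists_member_near_upper X e hX (proj1 He)) as [P [HP HPX]].
  pose proof (member_le_upper P X HP hX).
  pose proof (member_le_upper P (sqdev X c) HP (bounded_gamble_sqdev _ X hX c)).
  pose proof (lower_ind_le_bound P (upper Q X - eps) (upper Q X + u) c (eps + u) HP
                ltac:(lra)).
  replace (upper Q X + u - P X) with (u + (upper Q X - P X)) in * by ring.
  pose proof (sqr_add_le u (upper Q X - P X) e Hu ltac:(lra) (proj2 He)). lra.
Qed.

Lemma cantelli_le_lower_mean (c u : R) : 0 <= u ->
  Q (ind_le X (Q X - eps)) * (eps + u) ^ 2 <= Q (sqdev X c) + u ^ 2.
Proof.
  intros Hu. apply (le_of_forall_le_add_mul _ _ 1); [lra|]. intros e He.
  destruct (proj2 (HM_inf _ (bounded_gamble_sqdev _ X hX c)) e (proj1 He))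
    as [P [HP HPc]].
  pose proof (proj1 (HM_inf _ hX) P HP).
  pose proof (lower_ind_le_bound P (Q X - eps) (P X + u) c (eps + u) HP ltac:(lra)).
  replace (P X + u - P X) with u in * by ring. lra.
Qed.

Lemma cantelli_ge_lower_mean (c u : R) : 0 <= u ->
  Q (ind_ge X (Q X + eps)) * (eps + u) ^ 2 <= upper Q (sqdev X c) + u ^ 2.
Proof.
  intros Hu. apply (le_of_forall_le_add_mul _ _ (2 * u + 1)); [lra|]. intros e He.
  destruct (proj2 (HM_inf _ hX) e (proj1 He)) as [P [HP HPX]].
  pose proof (proj1 (HM_inf _ hX) P HP).
  pose proof (member_le_upper P (sqdev X c) HP (bounded_gamble_sqdev _ X hX c)).
  pose proof (lower_ind_ge_bound P (Q X + eps) (Q X - u) c (eps + u) HP ltac:(lra)).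
  replace ((Q X - u - P X) ^ 2) with ((u + (P X - Q X)) ^ 2) in * by ring.
  pose proof (sqr_add_le u (P X - Q X) e Hu ltac:(lra) (proj2 He)). lra.
Qed.

Lemma cantelli_ge_upper_mean (c u : R) : 0 <= u ->
  Q (ind_ge X (upper Q X + eps)) * (eps + u) ^ 2 <= Q (sqdev X c) + u ^ 2.
Proof.
  intros Hu. apply (le_of_forall_le_add_mul _ _ 1); [lra|]. intros e He.
  destruct (proj2 (HM_inf _ (bounded_gamble_sqdev _ X hX c)) e (proj1 He))
    as [P [HP HPc]].
  pose proof (member_le_upper P X HP hX).
  pose proof (lower_ind_ge_bound P (upper Q X + eps) (P X - u) c (eps + u) HP
                ltac:(lra)).
  replace (P X - u - P X) with (- u) in * by ring.
  replace ((- u) ^ 2) with (u ^ 2) in * by ring. lra.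
Qed.

End Cantelli.
End LowerEnvelope.

Theorem proposition5 (Om : Type) (inh : inhabited Om) (X : Om -> R)
  (hX : bounded_gamble X) (eps : R) (heps : 0 < eps) :
  (forall P : (Om -> R) -> R, coherent_lower (dom_a P X eps) P ->
   forall Q : (Om -> R) -> R, coherent_lower bounded_gamble Q ->
   (forall Y, dom_a P X eps Y -> Q Y = P Y) ->
   forall vl vu : R,
   is_min_over (fun c => Q (sqdev X c)) vl ->
   is_min_over (fun c => upper Q (sqdev X c)) vu ->
   P (ind_le X (upper P X - eps)) <= vu / (vu + eps ^ 2) /\
   P (ind_le X (P X - eps)) <= vl / (vl + eps ^ 2)) /\
  (forall P : (Om -> R) -> R, coherent_lower (dom_b P X eps) P ->
   forall Q : (Om -> R) -> R, coherent_lower bounded_gamble Q ->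
   (forall Y, dom_b P X eps Y -> Q Y = P Y) ->
   forall vl vu : R,
   is_min_over (fun c => Q (sqdev X c)) vl ->
   is_min_over (fun c => upper Q (sqdev X c)) vu ->
   P (ind_ge X (P X + eps)) <= vu / (vu + eps ^ 2) /\
   P (ind_ge X (upper P X + eps)) <= vl / (vl + eps ^ 2)).
Proof.
  split; intros P _ Q [M [_ [HM_linear HM_inf]]] HQP vl vu [[cl <-] _] [[cu <-] _];
    cbv beta;
    assert (EX : P X = Q X) by (symmetry; apply HQP; left; reflexivity);
    assert (EupX : upper P X = upper Q X)
      by (unfold upper; f_equal; symmetry; apply HQP; right; left; reflexivity);
    assert (Hvl : 0 <= Q (sqdev X cl))
      by (apply (lower_ge0 _ M Q HM_linear HM_inf); auto using bounded_gamble_sqdev;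
          intros w; apply pow2_ge_0);
    assert (Hvu : 0 <= upper Q (sqdev X cu))
      by (apply (upper_ge0 _ M Q HM_linear HM_inf); auto using bounded_gamble_sqdev;
          intros w; apply pow2_ge_0).
  - rewrite <- (HQP (ind_le X (upper P X - eps))) by (right; right; right; reflexivity).
    rewrite <- (HQP (ind_le X (P X - eps))) by (right; right; left; reflexivity).
    rewrite EX, EupX.
    split; apply le_cantelli_value; auto; intros u Hu.
    + apply (cantelli_le_upper_mean _ M Q HM_linear HM_inf); auto.
    + apply (cantelli_le_lower_mean _ M Q HM_linear HM_inf); auto.
  - rewrite <- (HQP (ind_ge X (P X + eps))) by (right; right; left; reflexivity).
    rewrite <- (HQP (ind_ge X (upper P X + eps))) by (right; right; right; reflexivity).
    rewrite EX, EupX.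
    split; apply le_cantelli_value; auto; intros u Hu.
    + apply (cantelli_ge_lower_mean _ M Q HM_linear HM_inf); auto.
    + apply (cantelli_ge_upper_mean _ M Q HM_linear HM_inf); auto.
Qed.
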